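(* Let $\gamma_{ab}$, $h_{ab}$ be real symmetric invertible $2\times2$ matrices with $a_1=\gamma_{ab}h^{ba}$, $a_2=\gamma_{ab}h^{bc}\gamma_{cd}h^{da}$, and $\gamma=|\det\gamma_{ab}|$. (i) (Diffeomorphism-invariant case.) Let $\mathcal{L}=\sqrt{\gamma}\,f(a_1,a_2)$ with $f$ continuously differentiable. If $\partial\mathcal{L}/\partial h^{ij}=0$ and $\partial f/\partial a_1\neq0$, then $h_{ab}=\phi\gamma_{ab}$ where $\phi$ is a root of the $\gamma$-independent equation $$\phi=-2\,\frac{\partial f/\partial a_2}{\partial f/\partial a_1}\Bigg|_{a_1=2\phi^{-1},\ a_2=2\phi^{-2}},$$ and the Lagrangian evaluates to $\mathcal{L}=c\sqrt{\gamma}$ with $c=f(2\phi^{-1},2\phi^{-2})$. (ii) (Diffeomorphism–Weyl-invariant case.) Let $\mathcal{L}=\sqrt{\gamma}\,f(a_2/a_1^2)$ with $f$ continuously differentiable. Then for every nonzero real $\phi$, $h_{ab}=\phi\gamma_{ab}$ satisfies $\partial\mathcal{L}/\partial h^{ij}=0$, and at any such $h$ the Lagrangian equals $f(\tfrac12)\sqrt{\gamma}$. Moreover, if $a_1\neq0$ and $f'(a_2/a_1^2)\neq0$, every solution of $\partial\mathcal{L}/\partial h^{ij}=0$ is of the form $h_{ab}=\phi\gamma_{ab}$ with $\phi\neq0$.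
   Context: $h^{ab}$ denotes the inverse of $h_{ab}$; derivatives with respect to $h^{ij}$ are taken with $\gamma_{ab}$ fixed, using $\partial a_1/\partial h^{ij}=\gamma_{ji}$ and $\partial a_2/\partial h^{ij}=2\gamma_{ja}h^{ab}\gamma_{bi}$. *)

From HB Require Import structures.
From mathcomp Require Import all_boot all_order all_algebra.
From mathcomp Require Import all_classical all_reals all_analysis.
Set Implicit Arguments. Unset Strict Implicit. Unset Printing Implicit Defensive.
Import Order.TTheory GRing.Theory Num.Theory.
Import numFieldNormedType.Exports.
Local Open Scope ring_scope.

Section Defs.
Variable R : realType.

Definition sym2 (A : 'M[R]_2) : Prop := A^T = A.

(* a_1 = gamma_{ab} h^{ba},  with Hi = (h^{ab}) the inverse of h *)
Definition a1 (g Hi : 'M[R]_2) : R := \tr (g *m Hi).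
Definition a2 (g Hi : 'M[R]_2) : R := \tr (g *m Hi *m g *m Hi).
Definition gam (g : 'M[R]_2) : R := `|\det g|.

Definition Lag1 (f : R -> R -> R) (g Hi : 'M[R]_2) : R :=
  Num.sqrt (gam g) * f (a1 g Hi) (a2 g Hi).

Definition Lag2 (f : R -> R) (g Hi : 'M[R]_2) : R :=
  Num.sqrt (gam g) * f (a2 g Hi / (a1 g Hi) ^+ 2).

(* partial derivative dL/dh^{ij}, with gamma fixed and the four entries
   h^{ab} treated as independent variables *)
Definition dL_dhinv (L : 'M[R]_2 -> R) (Hi : 'M[R]_2) (i j : 'I_2) : R :=
  derive1 (fun t : R => L (Hi + t *: delta_mx i j)) 0.

Definition d1 (f : R -> R -> R) (x y : R) : R := derive1 (fun t => f t y) x.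
Definition d2 (f : R -> R -> R) (x y : R) : R := derive1 (fun t => f x t) y.

Definition C1_2 (f : R -> R -> R) : Prop :=
  (forall x y, derivable (fun t => f t y) x 1 /\ derivable (fun t => f x t) y 1) /\
  continuous (fun p : R * R => d1 f p.1 p.2) /\
  continuous (fun p : R * R => d2 f p.1 p.2).

Definition C1_1 (f : R -> R) : Prop :=
  (forall x, derivable f x 1) /\ continuous (derive1 f).

End Defs.

From HB Require Import structures.
From mathcomp Require Import all_boot all_order all_algebra.
From mathcomp Require Import all_classical all_reals all_analysis.
Import Order.TTheory GRing.Theory Num.Theory.
Import numFieldNormedType.Exports.
From mathcomp Require Import ring lra.
Set Implicit Arguments. Unset Strict Implicit. Unset Printing Implicit Defensive.
Local Open Scope ring_scope.
Local Open Scope classical_set_scope.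

(* Along the coordinate line h^-1 + t E_ij one has a1 = a1 + t g_ji and
   a2 = a2 + 2t (g h^-1 g)_ji + t^2 g_ji^2, so by the chain rule the gradient
   is sqrt(gam) (g_ji f_1 + 2 (g h^-1 g)_ji f_2) in case (i) and
   sqrt(gam) f'(a2/a1^2) (2 (g h^-1 g)_ji / a1^2 - 2 a2 g_ji / a1^3) in case (ii).
   Its vanishing for all i, j says g h^-1 g = c g, i.e. h^-1 = c g^-1, with
   c = -f_1/(2 f_2), resp. c = a2/a1; then a1 = 2c and a2 = 2c^2, which turns the
   formula for c into the self-consistency equation for phi = 1/c.  Conversely
   h^-1 = c g^-1 kills the bracket of case (ii) identically.  The two-variable chain rule for f holds because the mean
   value theorem in the first slot and continuity of d1 f control the first-slot
   increment, while the second slot is a one-variable chain rule. *)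

Section real_derivatives.
Variable R : realType.

Lemma is_derive1_dquotP (F : R -> R) (x L : R) :
  is_derive x 1 F L <-> (fun h => h^-1 * (F (h + x) - F x)) @ 0^' --> L.
Proof.
have -> : (fun h => h^-1 * (F (h + x) - F x)) =
          (fun h => h^-1 *: ((F \o shift x) (h *: 1) - F x)).
  by apply/funext => h /=; rewrite [_ *: 1]mulr1.
split => [[dF <-] | dF]; first exact: dF.
by apply: DeriveDef; [exact: cvgP dF | exact: cvg_lim].
Qed.

Lemma MVT_between (G : R -> R) a b : (forall z, derivable G z 1) ->
  exists2 c, `|c - a| <= `|b - a| & G b - G a = derive1 G c * (b - a).
Proof.
move=> dG.
have dG' (z : R) : is_derive z 1 G (derive1 G z) by rewrite derive1E; exact: derivableP.
have cG (a' b' : R) : {within `[a', b'], continuous G}.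
  by apply: derivable_within_continuous => z _; exact: dG.
case: (leP a b) => [ab | /ltW ba].
  have [c /andP[ac cb] ->] := MVT_segment ab (fun z _ => dG' z) (cG a b).
  by exists c; rewrite // !ger0_norm ?subr_ge0 ?lerD2r.
have [c /andP[bc ca] E] := MVT_segment ba (fun z _ => dG' z) (cG b a).
exists c; last by rewrite -opprB E -mulrN opprB.
by rewrite !ler0_norm ?subr_le0 ?lerN2 ?lerD2r.
Qed.

Lemma partial1_remainder (T : Type) (F : set_system T) {FF : Filter F}
    (f : R -> R -> R) (u v : T -> R) (x y e : R) :
  C1_2 f -> u @ F --> x -> v @ F --> y -> 0 < e ->
  \forall p \near F,
    `|f (u p) (v p) - f x (v p) - (u p - x) * d1 f x y| <= e * `|u p - x|.
Proof.
move=> [df [cd1 _]] ux vy e0.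
have /cvgrPdist_lt /(_ e e0) /nbhs_ballP [d /= d0 near_xy] := cd1 (x, y).
have close (z : T -> R) z0 : z @ F --> z0 -> \forall p \near F, `|z0 - z p| < d.
  by move=> /cvgrPdist_lt /(_ d d0).
near=> p.
have [c cx ->] := MVT_between x (u p) (fun s => (df s (v p)).1).
rewrite [X in `|X - _|]mulrC -mulrBr normrM mulrC ler_wpM2r // distrC ltW //.
apply: (near_xy (c, v p)); split; rewrite /= -ball_normE /=.
  by rewrite distrC; apply: le_lt_trans cx _; rewrite distrC; near: p; exact: close.
by near: p; exact: close.
Unshelve. all: by end_near.
Qed.

Lemma cvg0_dominated (T : Type) (F : set_system T) {FF : Filter F}
    (a b : T -> R) (l : R) :
  b @ F --> l -> (forall e, 0 < e -> \forall p \near F, `|a p| <= e * `|b p|) ->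
  a @ F --> 0.
Proof.
move=> bl small; apply/cvgr0Pnorm_lt => eps eps0.
have M0 : 0 < `|l| + 1 by rewrite ltr_wpDl.
have bM : \forall p \near F, `|b p| < `|l| + 1.
  move: bl => /cvgrPdist_lt /(_ 1 ltr01); apply: filterS => p.
  by rewrite distrC; have := lerB_dist (b p) l; lra.
have := small (eps / (`|l| + 1)) (divr_gt0 eps0 M0).
apply: filter_app; near=> p => ap.
apply: (le_lt_trans ap); rewrite -[ltRHS](divfK (lt0r_neq0 M0)) ltr_pM2l ?divr_gt0 //.
by near: p.
Unshelve. all: by end_near.
Qed.

Lemma is_derive_comp2 (f : R -> R -> R) (u v : R -> R) (x du dv : R) :
  C1_2 f -> is_derive x 1 u du -> is_derive x 1 v dv ->
  is_derive x 1 (fun t => f (u t) (v t))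
    (du * d1 f (u x) (v x) + dv * d2 f (u x) (v x)).
Proof.
move=> Cf du_ dv_; have [df _] := Cf.
have near_x (w : R -> R) dw : is_derive x 1 w dw -> w \o shift x @ 0^' --> w x.
  move=> [dwx _]; apply/continuous_withinNshiftx.
  exact/differentiable_continuous/derivable1_diffP.
have second_slot : is_derive x 1 (f (u x) \o v) (d2 f (u x) (v x) * dv).
  apply: is_derive1_comp; rewrite /d2 derive1E.
  by apply: derivableP; case: (df (u x) (v x)).
pose E h := f (u (h + x)) (v (h + x)) - f (u x) (v (h + x))
            - (u (h + x) - u x) * d1 f (u x) (v x).
have Eo : (fun h => h^-1 * E h) @ 0^' --> 0.
  apply: (@cvg0_dominated _ _ _ _ (fun h => h^-1 * (u (h + x) - u x)) du).
    by move/is_derive1_dquotP: du_.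
  move=> e e0.
  apply: filterS (partial1_remainder Cf (near_x _ _ du_) (near_x _ _ dv_) e0) => h.
  by rewrite /E !normrM mulrCA; apply: ler_wpM2l.
apply/is_derive1_dquotP.
have -> : (fun h => h^-1 * (f (u (h + x)) (v (h + x)) - f (u x) (v x))) =
  (fun h => h^-1 * (u (h + x) - u x) * d1 f (u x) (v x) + h^-1 * E h
            + h^-1 * ((f (u x) \o v) (h + x) - (f (u x) \o v) x)).
  by apply/funext => h; rewrite /E /=; ring.
rewrite -[du * _]addr0 [dv * _]mulrC.
apply: cvgD; last by move/is_derive1_dquotP: second_slot.
by apply: cvgD Eo; apply: cvgM (cvg_cst _); move/is_derive1_dquotP: du_.
Qed.

Lemma is_derive_div_sqr (u v : R -> R) (x du dv : R) :
  u x != 0 -> is_derive x 1 u du -> is_derive x 1 v dv ->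
  is_derive x 1 (fun t => v t / u t ^+ 2)
    (dv / u x ^+ 2 - 2 * v x * du / u x ^+ 3).
Proof.
move=> ux0 du_ dv_.
have u2 : (u ^+ 2) x != 0 by rewrite exprfctE expf_neq0.
have -> : (fun t => v t / u t ^+ 2) = v * (fun t => ((u ^+ 2) t)^-1) by [].
by apply: is_derive_eq; rewrite exprfctE /GRing.scale /=; field.
Qed.
End real_derivatives.

Section trace_delta.
Variables (R : pzRingType) (n : nat).

Lemma mxtrace_mul_delta (A : 'M[R]_n) i j :
  \tr (A *m delta_mx i j) = A j i.
Proof.
rewrite /mxtrace (bigD1 j) //= big1 => [|k kj]; rewrite mxE.
  rewrite (bigD1 i) //= big1 => [|l li]; rewrite mxE ?eqxx ?mulr1 ?addr0 //.
  by rewrite (negbTE li) mulr0.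
by rewrite big1 // => l _; rewrite mxE eq_sym (negbTE kj) andbF mulr0.
Qed.

Lemma delta_mx_mul_delta_mx (A : 'M[R]_n) i j :
  delta_mx i j *m A *m delta_mx i j = A j i *: delta_mx i j.
Proof.
apply/matrixP => k l; rewrite !mxE (bigD1 i) //= big1 => [|m mi]; rewrite !mxE.
  rewrite (bigD1 j) //= big1 => [|m mj]; rewrite !mxE ?(negbTE mj) ?andbF ?mul0r //.
  by case: (k == i); case: (l == j);
    rewrite !eqxx /= ?(mulr0, mul0r, mulr1, mul1r, addr0).
by rewrite (negbTE mi) andFb mulr0.
Qed.
End trace_delta.

Section gradients.
Variables (R : realType) (g H : 'M[R]_2) (i j : 'I_2).

Lemma a1_line (t : R) : a1 g (H + t *: delta_mx i j) = a1 g H + t * g j i.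
Proof. by rewrite /a1 mulmxDr mxtraceD -scalemxAr mxtraceZ mxtrace_mul_delta. Qed.

Lemma a2_line (t : R) : a2 g (H + t *: delta_mx i j) =
  a2 g H + t * (2 * (g *m H *m g) j i) + t ^+ 2 * g j i ^+ 2.
Proof.
have cross : \tr (g *m delta_mx i j *m g *m H) = (g *m H *m g) j i.
  by rewrite -mulmxA mxtrace_mulC mulmxA mxtrace_mul_delta.
have square : \tr (g *m delta_mx i j *m g *m delta_mx i j) = g j i ^+ 2.
  rewrite -!mulmxA (mulmxA (delta_mx i j)) delta_mx_mul_delta_mx.
  by rewrite -scalemxAr mxtraceZ mxtrace_mul_delta.
rewrite /a2 !(mulmxDr, mulmxDl) !mxtraceD -!(scalemxAr, scalemxAl) !mxtraceZ.
by rewrite cross square mxtrace_mul_delta; ring.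
Qed.

Lemma is_derive_a1_line :
  is_derive (0 : R) 1 (fun t => a1 g (H + t *: delta_mx i j)) (g j i).
Proof.
have -> : (fun t => a1 g (H + t *: delta_mx i j)) = cst (a1 g H) + id * cst (g j i).
  by apply/funext => t; rewrite a1_line.
by apply: is_derive_eq; rewrite /= scaler0 !add0r [_%:A]mulr1.
Qed.

Lemma is_derive_a2_line :
  is_derive (0 : R) 1 (fun t => a2 g (H + t *: delta_mx i j)) (2 * (g *m H *m g) j i).
Proof.
have -> : (fun t => a2 g (H + t *: delta_mx i j)) =
  cst (a2 g H) + id * cst (2 * (g *m H *m g) j i) + id ^+ 2 * cst (g j i ^+ 2).
  by apply/funext => t; rewrite a2_line.
apply: is_derive_eq; rewrite /= !scaler0 !add0r expr1 mulr0 scale0r scaler0.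
by rewrite addr0 [_%:A]mulr1.
Qed.

Lemma dL_dhinv_Lag1 (f : R -> R -> R) : C1_2 f ->
  dL_dhinv (Lag1 f g) H i j = Num.sqrt (gam g) *
    (g j i * d1 f (a1 g H) (a2 g H)
     + 2 * (g *m H *m g) j i * d2 f (a1 g H) (a2 g H)).
Proof.
move=> Cf.
have := is_derive_comp2 Cf is_derive_a1_line is_derive_a2_line.
rewrite /= scale0r addr0 => -[dL <-].
by rewrite /dL_dhinv /Lag1 derive1Ml // derive1E.
Qed.

Lemma dL_dhinv_Lag2 (f : R -> R) : C1_1 f -> a1 g H != 0 ->
  dL_dhinv (Lag2 f g) H i j = Num.sqrt (gam g) *
    (derive1 f (a2 g H / a1 g H ^+ 2) *
     (2 * (g *m H *m g) j i / a1 g H ^+ 2 - 2 * a2 g H * g j i / a1 g H ^+ 3)).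
Proof.
move=> [df _] a1H.
have := is_derive_div_sqr _ is_derive_a1_line is_derive_a2_line.
rewrite /= scale0r addr0 => /(_ a1H) ratio.
have [dL] := is_derive1_comp (derivableP (df _)) ratio.
rewrite /= scale0r addr0 => dL_val.
by rewrite /dL_dhinv /Lag2 derive1Ml // derive1E dL_val derive1E.
Qed.
End gradients.

Lemma sandwich_eq_scaleP (R : comUnitRingType) n (g H : 'M[R]_n) (c : R) :
  g \in unitmx -> g *m H *m g = c *: g <-> H = c *: invmx g.
Proof.
move=> ug; split=> [gHg | ->]; last by rewrite -scalemxAr mulmxV // -scalemxAl mul1mx.
have -> : H = invmx g *m (g *m H *m g) *m invmx g.
  by rewrite !mulmxA mulVmx // mul1mx -mulmxA mulmxV // mulmx1.
by rewrite gHg -scalemxAr -scalemxAl mulVmx // mul1mx.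
Qed.

Lemma invmx_scale_invmx (R : fieldType) n (g : 'M[R]_n.+1) (c : R) :
  g \in unitmx -> c != 0 -> invmx (c *: invmx g) = c^-1 *: g.
Proof. by move=> ug c0; rewrite invmxZ ?invmxK // unitmxZ ?unitfE ?unitmx_inv. Qed.

Section scalar_inverse.
Variables (R : realType) (g : 'M[R]_2).
Hypothesis ug : g \in unitmx.

Lemma sqrt_gam_neq0 : Num.sqrt (gam g) != 0.
Proof. by rewrite gt_eqF // sqrtr_gt0 /gam normr_gt0 -unitfE -unitmxE. Qed.

Lemma a1_scale_invmx (c : R) : a1 g (c *: invmx g) = 2 * c.
Proof. by rewrite /a1 -scalemxAr mulmxV // mxtraceZ mxtrace1 mulrC. Qed.

Lemma a2_scale_invmx (c : R) : a2 g (c *: invmx g) = 2 * c ^+ 2.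
Proof.
rewrite /a2 (proj2 (sandwich_eq_scaleP _ _ ug) erefl) -scalemxAl -scalemxAr mulmxV //.
by rewrite !mxtraceZ mxtrace1 mulrA -expr2 mulrC.
Qed.

Lemma Lag2_scale_invmx (f : R -> R) (c : R) :
  c != 0 -> Lag2 f g (c *: invmx g) = f 2^-1 * Num.sqrt (gam g).
Proof.
move=> c0; rewrite /Lag2 a1_scale_invmx a2_scale_invmx mulrC.
by congr (f _ * _); field.
Qed.

Lemma Lag2_scale_invmx_stationary (f : R -> R) (c : R) : C1_1 f -> c != 0 ->
  forall i j, dL_dhinv (Lag2 f g) (c *: invmx g) i j = 0.
Proof.
move=> Cf c0 i j; have a1c : a1 g (c *: invmx g) != 0.
  by rewrite a1_scale_invmx mulf_neq0 ?pnatr_eq0.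
rewrite dL_dhinv_Lag2 // (proj2 (sandwich_eq_scaleP _ _ ug) erefl) mxE.
by rewrite a1_scale_invmx a2_scale_invmx [X in _ * X]mulrC; field.
Qed.
End scalar_inverse.

Lemma Lag1_stationary (R : realType) (f : R -> R -> R) (g H : 'M[R]_2) :
  C1_2 f -> g \in unitmx ->
  (forall i j, dL_dhinv (Lag1 f g) H i j = 0) ->
  d1 f (a1 g H) (a2 g H) != 0 ->
  exists phi : R, [/\ phi != 0, H = phi^-1 *: invmx g
    & phi = - 2 * d2 f (a1 g H) (a2 g H) / d1 f (a1 g H) (a2 g H)].
Proof.
move=> Cf ug crit f1n; set f1 := d1 f _ _ in f1n *; set f2 := d2 f _ _.
have grad0 k l : g l k * f1 + 2 * (g *m H *m g) l k * f2 = 0.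
  have /eqP := crit k l; rewrite dL_dhinv_Lag1 // mulf_eq0.
  by rewrite (negbTE (sqrt_gam_neq0 ug)) => /eqP.
have f2n : f2 != 0.
  apply: contraTneq ug => f20; suff -> : g = 0 by rewrite unitmxE det0 unitr0.
  apply/matrixP => k l; have /eqP := grad0 l k.
  by rewrite f20 mulr0 addr0 mulf_eq0 (negbTE f1n) orbF mxE => /eqP.
exists (- 2 * f2 / f1); split => //.
  by rewrite !mulf_neq0 ?oppr_eq0 ?invr_eq0 ?pnatr_eq0.
apply/(sandwich_eq_scaleP _ _ ug)/matrixP => k l; rewrite [RHS]mxE.
apply/eqP; rewrite -subr_eq0.
have -> : (g *m H *m g) k l - (- 2 * f2 / f1)^-1 * g k l =
          (g k l * f1 + 2 * (g *m H *m g) k l * f2) / (2 * f2).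
  by field; rewrite f1n f2n.
by rewrite grad0 mul0r.
Qed.

Lemma Lag2_stationary (R : realType) (f : R -> R) (g H : 'M[R]_2) :
  C1_1 f -> g \in unitmx -> a1 g H != 0 ->
  derive1 f (a2 g H / a1 g H ^+ 2) != 0 ->
  (forall i j, dL_dhinv (Lag2 f g) H i j = 0) ->
  H = (a2 g H / a1 g H) *: invmx g.
Proof.
move=> Cf ug a1n f'n crit.
set A1 := a1 g H in a1n f'n crit *; set A2 := a2 g H in f'n crit *.
apply/(sandwich_eq_scaleP _ _ ug)/matrixP => k l; rewrite [RHS]mxE; apply/eqP.
have /eqP := crit l k; rewrite dL_dhinv_Lag2 // !mulf_eq0.
rewrite (negbTE (sqrt_gam_neq0 ug)) (negbTE f'n) => /eqP grad0.
rewrite -subr_eq0; have -> : (g *m H *m g) k l - A2 / A1 * g k l =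
   (2 * (g *m H *m g) k l / A1 ^+ 2 - 2 * A2 * g k l / A1 ^+ 3) * A1 ^+ 2 / 2.
  by field.
by rewrite grad0 !mul0r.
Qed.

Theorem mainTheorem8 (R : realType) :
  (* (i) diffeomorphism-invariant case *)
  (forall (f : R -> R -> R) (g h : 'M[R]_2),
     C1_2 f ->
     sym2 g -> g \in unitmx -> sym2 h -> h \in unitmx ->
     (forall i j : 'I_2, dL_dhinv (Lag1 f g) (invmx h) i j = 0) ->
     d1 f (a1 g (invmx h)) (a2 g (invmx h)) != 0 ->
     exists phi : R,
       [/\ phi != 0, h = phi *: g,
           phi = - 2 * d2 f (2 / phi) (2 / phi ^+ 2) / d1 f (2 / phi) (2 / phi ^+ 2)
         & Lag1 f g (invmx h) = f (2 / phi) (2 / phi ^+ 2) * Num.sqrt (gam g)]) /\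
  (* (ii) diffeomorphism-Weyl-invariant case *)
  (forall (f : R -> R) (g : 'M[R]_2),
     C1_1 f -> sym2 g -> g \in unitmx ->
     (forall phi : R, phi != 0 ->
        (forall i j : 'I_2, dL_dhinv (Lag2 f g) (invmx (phi *: g)) i j = 0) /\
        Lag2 f g (invmx (phi *: g)) = f (2^-1) * Num.sqrt (gam g)) /\
     (forall h : 'M[R]_2, sym2 h -> h \in unitmx ->
        a1 g (invmx h) != 0 ->
        derive1 f (a2 g (invmx h) / (a1 g (invmx h)) ^+ 2) != 0 ->
        (forall i j : 'I_2, dL_dhinv (Lag2 f g) (invmx h) i j = 0) ->
        exists phi : R, phi != 0 /\ h = phi *: g)).
Proof.
split=> [f g h Cf _ ug _ uh crit f1n | f g Cf _ ug].
  have [phi [phi0 hE phiE]] := Lag1_stationary Cf ug crit f1n.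
  have a1E : a1 g (invmx h) = 2 / phi by rewrite hE a1_scale_invmx.
  have a2E : a2 g (invmx h) = 2 / phi ^+ 2 by rewrite hE a2_scale_invmx // exprVn.
  exists phi; rewrite -a1E -a2E; split => //.
    by rewrite -[LHS]invmxK hE invmx_scale_invmx ?invrK ?invr_eq0.
  by rewrite /Lag1 mulrC.
have invmx_phi (phi : R) : phi != 0 -> invmx (phi *: g) = phi^-1 *: invmx g.
  by move=> phi0; rewrite invmxZ // unitmxZ ?unitfE.
split=> [phi phi0 | h _ uh a1n f'n crit].
  have phiV0 : phi^-1 != 0 by rewrite invr_eq0.
  rewrite invmx_phi // Lag2_scale_invmx //; split => //.
  exact: Lag2_scale_invmx_stationary.
have := Lag2_stationary Cf ug a1n f'n crit.
set c := a2 g (invmx h) / a1 g (invmx h) => hE.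
have c0 : c != 0.
  have : invmx h \in unitmx by rewrite unitmx_inv.
  by apply: contraTneq => c0; rewrite hE c0 scale0r unitmxE det0 unitr0.
exists c^-1; split; first by rewrite invr_eq0.
by rewrite -[LHS]invmxK hE invmx_scale_invmx.
Qed.
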